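(* Let $x_i,y_i\in K_i$ for each $1\le i\le N$. Then: (i) $\lim_{m\to-\infty}d\big(Y^{x_1\dots x_N}_{m0}(\sigma),Y^{y_1\dots y_N}_{m0}(\sigma)\big)=0$ for all $\sigma$ outside a set of $P_{x_1\dots x_N}$-outer measure zero; (ii) the limit $F_{x_1\dots x_N}(\sigma):=\lim_{m\to-\infty}Y^{x_1\dots x_N}_{m0}(\sigma)$ exists for all $\sigma$ outside a set of $P_{x_1\dots x_N}$-outer measure zero, and $F_{x_1\dots x_N}=F_{y_1\dots y_N}$ outside a set of $P_{x_1\dots x_N}$-outer measure zero; (iii) there exist closed subsets $Q_1\subset Q_2\subset\cdots\subset\Sigma$ with $\sum_{k=1}^\infty P_{x_1\dots x_N}(\Sigma\setminus Q_k)<\infty$, and constants $\alpha,C>0$, such that for every $k$ there exists $\delta_k>0$ with: $F_{x_1\dots x_N}$ is defined on $Q_k$ and for all $\sigma,\sigma'\in Q_k$ with $d'(\sigma,\sigma')\le\delta_k$, $d(F_{x_1\dots x_N}(\sigma),F_{x_1\dots x_N}(\sigma'))\le C\,d'(\sigma,\sigma')^\alpha$.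
   Context: A contractive Markov system (CMS) with average contracting rate $0<a<1$ consists of: a finite directed multigraph $(V,E,i,t)$ with vertex set $V=\{1,\dots,N\}$, finite edge set $E$, and maps $i,t:E\to V$ giving the initial and terminal vertex of each edge; a complete metric space $(K,d)$ partitioned into non-empty Borel sets $K_1,\dots,K_N$; Borel measurable maps $w_e:K\to K$ ($e\in E$) with $w_e(K_{i(e)})\subset K_{t(e)}$; Borel measurable functions $p_e:K\to[0,\infty)$ with $\sum_{e\in E}p_e(x)=1$ for all $x\in K$ and $p_e=0$ on $K\setminus K_{i(e)}$; and such that $\sum_{e\in E}p_e(x)d(w_ex,w_ey)\leq a\,d(x,y)$ for all $x,y\in K_j$, $j=1,\dots,N$. No further conditions are imposed on the graph. Let $\Sigma:=E^{\mathbb{Z}}$ with metric $d'(\sigma,\sigma'):=(1/2)^k$ where $k$ is the largest integer with $\sigma_j=\sigma'_j$ for all $|j|<k$. For $m\le n$ the cylinder $_m[e_m,\dots,e_n]:=\{\sigma\in\Sigma:\sigma_j=e_j,\ m\le j\le n\}$. For an integer $m\le 1$, $\mathcal{A}_m$ is the $\sigma$-algebra generated by the cylinders $_m[e_m,\dots,e_n]$, $n\ge m$. For $x\in K$, $P^m_x$ is the probability measure on $(\Sigma,\mathcal{A}_m)$ with $P^m_x(_m[e_m,\dots,e_n])=p_{e_m}(x)\,p_{e_{m+1}}(w_{e_m}x)\cdots p_{e_n}(w_{e_{n-1}}\circ\cdots\circ w_{e_m}x)$. For a Borel probability measure $\nu$ on $K$, $\Phi_m(\nu)(A)=\int P^m_x(A)\,d\nu(x)$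 for $A\in\mathcal{A}_m$. For $B\subset\Sigma$ let $\mathcal{C}(B)$ be the set of sequences $(A_m)_{m\le 0}$ with $A_m\in\mathcal{A}_m$ and $B\subset\bigcup_{m\le 0}A_m$, and $\Phi(\nu)(B):=\inf\{\sum_{m\le 0}\Phi_m(\nu)(A_m):(A_m)_{m\le0}\in\mathcal{C}(B)\}$ (an outer measure on $\Sigma$). Fix $x_i\in K_i$, $i=1,\dots,N$, and set $P^m_{x_1\dots x_N}:=\Phi_m\big(\frac1N\sum_{i=1}^N\delta_{x_i}\big)$ and $P_{x_1\dots x_N}:=\Phi\big(\frac1N\sum_{i=1}^N\delta_{x_i}\big)$, where $\delta_x$ is the Dirac measure at $x$. For $m\le 0$ and $n\ge m$ define $Y^{x_1\dots x_N}_{mn}:\Sigma\to K$ by $Y^{x_1\dots x_N}_{mn}(\sigma):=w_{\sigma_n}\circ w_{\sigma_{n-1}}\circ\cdots\circ w_{\sigma_m}(x_{i(\sigma_m)})$. *)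

From HB Require Import structures.
From mathcomp Require Import all_boot all_order all_algebra.
From mathcomp Require Import all_classical all_reals all_analysis.
Set Implicit Arguments. Unset Strict Implicit. Unset Printing Implicit Defensive.
Import Order.TTheory GRing.Theory Num.Theory numFieldNormedType.Exports.
Local Open Scope classical_set_scope.
Local Open Scope ring_scope.

Section Metric.
Variables (R : realType) (K : Type) (d : K -> K -> R).

Definition is_metric : Prop :=
  (forall x y, 0 <= d x y) /\ (forall x y, d x y = 0 <-> x = y) /\
  (forall x y, d x y = d y x) /\ (forall x y z, d x z <= d x y + d y z).

Definition mconv (u : nat -> K) (l : K) : Prop :=
  forall e : R, 0 < e -> exists M : nat, forall n, (M <= n)%N -> d (u n) l < e.

Definition mcauchy (u : nat -> K) : Prop :=
  forall e : R, 0 < e -> exists M : nat, forall n k, (M <= n)%N -> (M <= k)%N ->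
    d (u n) (u k) < e.

Definition mcomplete : Prop := forall u, mcauchy u -> exists l, mconv u l.

Definition mopen (A : set K) : Prop :=
  forall x, A x -> exists2 e : R, 0 < e & forall y, d x y < e -> A y.

Definition mborel : set (set K) := <<s mopen >>.

Definition mclosed (A : set K) : Prop :=
  forall x, (forall e : R, 0 < e -> exists2 y, A y & d x y < e) -> A x.
End Metric.

(* vertices V = {1..N} are represented by 'I_N ; edges by a finType E *)
Record CMS (R : realType) (K : Type) (E : finType) (N : nat) := {
  cms_d : K -> K -> R;
  cms_Kp : 'I_N -> set K;
  cms_i : E -> 'I_N;                 (* initial vertex *)
  cms_t : E -> 'I_N;                 (* terminal vertex *)
  cms_w : E -> K -> K;
  cms_p : E -> K -> R;
  cms_a : R;
  cms_metric : is_metric cms_d;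
  cms_complete : mcomplete cms_d;
  cms_Kp_nonempty : forall j, cms_Kp j !=set0;
  cms_Kp_borel : forall j, mborel cms_d (cms_Kp j);
  cms_Kp_cover : \bigcup_j cms_Kp j = setT;
  cms_Kp_disj : forall j k, j != k -> cms_Kp j `&` cms_Kp k = set0;
  cms_w_borel : forall e B, mborel cms_d B -> mborel cms_d (cms_w e @^-1` B);
  cms_w_maps : forall e, cms_w e @` cms_Kp (cms_i e) `<=` cms_Kp (cms_t e);
  cms_p_borel : forall e (B : set R), measurable B ->
                  mborel cms_d (cms_p e @^-1` B);
  cms_p_ge0 : forall e x, 0 <= cms_p e x;
  cms_p_sum1 : forall x, \sum_(e : E) cms_p e x = 1;
  cms_p_supp : forall e x, ~ cms_Kp (cms_i e) x -> cms_p e x = 0;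
  cms_a_gt0 : 0 < cms_a;
  cms_a_lt1 : cms_a < 1;
  cms_contr : forall j x y, cms_Kp j x -> cms_Kp j y ->
     \sum_(e : E) cms_p e x * cms_d (cms_w e x) (cms_w e y) <= cms_a * cms_d x y
}.

Definition Sig (E : Type) := int -> E.

Definition agree_upto (E : Type) (s s' : Sig E) (k : nat) : Prop :=
  forall j : int, (`|j| < k)%N -> s j = s' j.

(* d'(s,s') = (1/2)^k, k the largest integer with s_j = s'_j for |j| < k;
   d'(s,s) = 0. *)
Definition dsig (R : realType) (E : Type) (s s' : Sig E) : R :=
  match pselect (exists n : nat, ~ agree_upto s s' n.+1) with
  | left h =>
      (2^-1) ^+ (ex_minn (P := fun n => ~~ `[< agree_upto s s' n.+1 >])
                   (let: ex_intro n hn := h in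
                    ex_intro _ n (introN (asboolP _) hn)))
  | right _ => 0
  end.

Definition sig_closed (R : realType) (E : Type) (Q : set (Sig E)) : Prop :=
  forall s, (forall eps : R, 0 < eps -> exists2 s', Q s' & dsig R s s' < eps) -> Q s.

(* cylinder  _m[e_m, ..., e_n]  with [:: e_m; ...; e_n] = l (non-empty) *)
Definition cyl (E : Type) (m : int) (l : seq E) : set (Sig E) :=
  [set s | forall j : nat, (j < size l)%N -> Some (s (m + j%:Z)%R) = onth l j].

Definition Asig (E : Type) (m : int) : set (set (Sig E)) :=
  <<s [set cyl m (e :: l) | e in [set: E] & l in [set: seq E]] >>.

Section CMSdefs.
Variables (R : realType) (K : Type) (E : finType) (N : nat) (M : CMS R K E N).
Local Notation w := (cms_w M).
Local Notation p := (cms_p M).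

Fixpoint pcyl (x : K) (l : seq E) : R :=
  if l is e :: l' then p e x * pcyl (w e x) l' else 1.

(* Pm m x is the probability measure P^m_x on (Sigma, A_m) *)
Definition is_Pfamily (Pm : int -> K -> set (Sig E) -> \bar R) : Prop :=
  forall (m : int) (x : K), (m <= 0)%R ->
    [/\ Pm m x set0 = 0%E,
        (forall A, Asig m A -> (0 <= Pm m x A)%E),
        (forall F : nat -> set (Sig E), (forall n, Asig m (F n)) ->
            trivIset setT F ->
            (fun n => \sum_(k < n) Pm m x (F k))%E @ \oo --> Pm m x (\bigcup_n F n)),
        Pm m x setT = 1%E &
        (forall e l, Pm m x (cyl m (e :: l)) = (pcyl x (e :: l))%:E)].

(* Phi_m((1/N) sum_i delta_{x_i})(A) = int P^m_x(A) d nu(x) *)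
Definition Phim (Pm : int -> K -> set (Sig E) -> \bar R) (xs : 'I_N -> K)
  (m : int) (A : set (Sig E)) : \bar R :=
  ((N%:R)^-1)%:E * (\sum_(i < N) Pm m (xs i) A)%E.

(* the outer measure P_{x_1...x_N} = Phi((1/N) sum_i delta_{x_i});
   the cover (A_m)_{m <= 0} is indexed by n : nat with m = -n *)
Definition Pout (Pm : int -> K -> set (Sig E) -> \bar R) (xs : 'I_N -> K)
  (B : set (Sig E)) : \bar R :=
  ereal_inf [set (\sum_(0 <= n <oo) Phim Pm xs (- n%:Z) (A n))%E
            | A in [set A : nat -> set (Sig E) |
                     (forall n, Asig (- n%:Z) (A n)) /\ B `<=` \bigcup_n A n]].

Fixpoint Yit (xs : 'I_N -> K) (m : int) (k : nat) (s : Sig E) : K :=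
  match k with
  | 0 => w (s m) (xs (cms_i M (s m)))
  | k'.+1 => w (s (m + k%:Z)%R) (Yit xs m k' s)
  end.

(* Y^{x_1..x_N}_{m0} with m = -n, n : nat *)
Definition Y0 (xs : 'I_N -> K) (n : nat) (s : Sig E) : K := Yit xs (- n%:Z) n s.

End CMSdefs.

From HB Require Import structures.
From mathcomp Require Import all_boot all_order all_algebra.
From mathcomp Require Import all_classical all_reals all_analysis.
From mathcomp Require Import ring lra zify.
Import Order.TTheory GRing.Theory Num.Theory numFieldNormedType.Exports.
Local Open Scope classical_set_scope.
Local Open Scope ring_scope.
Set Implicit Arguments. Unset Strict Implicit. Unset Printing Implicit Defensive.

(* Iterating the contraction condition along words of length n + 1 gives
   E_x[d(Y^x_{-n,0}, Y^y_{-n,0})] <= a^(n+1) d(x, y) and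
   E_x[d(Y^x_{-n-1,0}, Y^x_{-n,0})] <= a^(n+1) D, the expectations being
   finite sums over words weighted by P^{-n}_x.  Markov's inequality at the
   threshold b^n, with b = sqrt a, shows that the words on which one of these
   distances exceeds b^n carry mass O(b^n); they form a set of A_{-n}, so the
   union over n >= n0 has outer P-measure O(b^n0).  Off the intersection of
   these unions both distances are eventually below b^n, hence Y^x_{m0} is
   Cauchy and Y^x, Y^y share the limit.  Q_k, where the increments are below
   b^n for all n >= k, is closed and has complement of mass O(b^k); on it
   d(F, Y_{-n,0}) <= b^n / (1 - b).  Two sequences at distance 2^-(n+1) have
   the same Y_{-n,0}, which yields Hoelder continuity with exponent
   log b / log (1/2). *)

Section Words.
Variable E : finType.

Fixpoint words (k : nat) : seq (seq E) :=
  if k is k'.+1 then [seq e :: l | e <- index_enum E, l <- words k'] else [:: [::]].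

Lemma mem_words k l : (l \in words k) = (size l == k).
Proof.
elim: k l => [|k IH] [|e l] //=.
- by apply/negbTE/allpairsP => -[[x y] /= [_ _ ]].
- apply/allpairsP/idP => [[[x y] /= [_ hy [_ ->]]]|hl].
    by rewrite eqSS -IH.
  by exists (e, l); rewrite /= mem_index_enum IH.
Qed.

Lemma uniq_words k : uniq (words k).
Proof.
elim: k => [|k IH] //=.
apply: allpairs_uniq => //; first exact: index_enum_uniq.
by move=> [x y] [x' y'] _ _ /= [-> ->].
Qed.

Lemma big_words_S (V : nmodType) k (F : seq E -> V) :
  \sum_(l <- words k.+1) F l = \sum_(e : E) \sum_(l <- words k) F (e :: l).
Proof. by rewrite /= big_allpairs_dep. Qed.

End Words.

Section WeightedSums.
Variables (R : realFieldType) (I : Type) (s : seq I) (W : I -> R).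
Hypothesis W_ge0 : forall i, 0 <= W i.

Lemma markov_sum (g : I -> R) c : 0 < c -> (forall i, 0 <= g i) ->
  \sum_(i <- s | c < g i) W i <= c^-1 * \sum_(i <- s) W i * g i.
Proof.
move=> c0 g0; rewrite big_mkcond big_distrr /=.
apply: ler_sum => i _; case: ifP => h.
  rewrite mulrCA; apply: ler_peMr; first exact: W_ge0.
  by rewrite ler_pdivlMl // mulr1 ltW.
by apply: mulr_ge0; [rewrite invr_ge0 ltW | apply: mulr_ge0].
Qed.

Lemma sum_orb_le (P Q : pred I) :
  \sum_(i <- s | P i || Q i) W i <=
  \sum_(i <- s | P i) W i + \sum_(i <- s | Q i) W i.
Proof.
rewrite big_mkcond (big_mkcond P) (big_mkcond Q) -big_split /=.
apply: ler_sum => i _; case: (P i); case: (Q i) => //=; rewrite ?addr0 ?add0r //.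
by rewrite lerDl W_ge0.
Qed.

End WeightedSums.

Section Geometric.
Variables (R : realType) (q : R).
Hypotheses (q_gt0 : 0 < q) (q_lt1 : q < 1).

Lemma exists_expr_lt t : 0 < t -> exists n, q ^+ n < t.
Proof.
move=> t0; have hq : `|q| < 1 by rewrite ger0_norm // ltW.
have /cvgrPdist_lt /(_ t t0) [n _ hn] := cvg_expr hq.
exists n; have := hn n (leqnn n); rewrite /= sub0r normrN ger0_norm //.
by rewrite exprn_ge0 // ltW.
Qed.

Lemma exists_geo_tail_lt C eps : 0 <= C -> 0 < eps ->
  exists n, C * q ^+ n / (1 - q) < eps.
Proof.
move=> C0 e0; have q1 : 0 < 1 - q by rewrite subr_gt0.
have t0 : 0 < eps * (1 - q) / (C + 1) by rewrite divr_gt0 ?mulr_gt0 // ltr_wpDl.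
have [n hn] := exists_expr_lt t0; exists n.
have qn : 0 <= q ^+ n by rewrite exprn_ge0 // ltW.
rewrite ltr_pdivrMr //; move: hn; rewrite ltr_pdivlMr ?ltr_wpDl // => hn.
nra.
Qed.

Lemma cvg0_expr_bound (f : nat -> R) n0 : (forall n, 0 <= f n) ->
  (forall n, (n0 <= n)%N -> f n <= q ^+ n) -> f @ \oo --> 0.
Proof.
move=> f0 fq; apply/cvgrPdist_lt => e e0.
have [n1 hn1] := exists_expr_lt e0.
near=> n.
have hn : (maxn n0 n1 <= n)%N by near: n; exists (maxn n0 n1).
move: hn; rewrite geq_max => /andP [h0 h1].
rewrite sub0r normrN ger0_norm //; apply: le_lt_trans (fq n h0) _.
apply: le_lt_trans hn1; apply: ler_wiXn2l; [exact: ltW | exact: ltW | exact: h1].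
Unshelve. all: by end_near.
Qed.

Lemma geo_tail_partial_sum (C : R) n0 n :
  (1 - q) * \sum_(0 <= k < n) (if (n0 <= k)%N then C * q ^+ k else 0) =
  if (n0 <= n)%N then C * (q ^+ n0 - q ^+ n) else 0.
Proof.
elim: n => [|n IH].
  by rewrite big_geq // mulr0; case: n0 => //=; rewrite subrr mulr0.
rewrite big_nat_recr //= mulrDr IH.
case: (ltngtP n0 n) => h.
- by rewrite (leq_trans (ltnW h) (leqnSn n)) exprS; ring.
- case: ifP => h2; last by rewrite mulr0 addr0.
  have -> : n0 = n.+1 by apply/eqP; rewrite eqn_leq h2 h.
  by rewrite subrr !mulr0 addr0.
- by subst n0; rewrite leqnSn exprS subrr; ring.
Qed.

Lemma nneseries_geo_le (f : nat -> \bar R) (C : R) n0 : 0 <= C ->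
  (forall n, 0 <= f n)%E ->
  (forall n, f n <= (if (n0 <= n)%N then C * q ^+ n else 0)%:E)%E ->
  (\sum_(0 <= n <oo) f n <= (C * q ^+ n0 / (1 - q))%:E)%E.
Proof.
move=> C0 f0 fq.
apply: lime_le; first by apply: is_cvg_nneseries => n _ _; exact: f0.
apply: nearW => n.
apply: (@le_trans _ _
  (\sum_(0 <= k < n) (if (n0 <= k)%N then C * q ^+ k else 0)%:E)%E).
  by apply: lee_sum => k _; exact: fq.
have q1 : 0 < 1 - q by rewrite subr_gt0.
rewrite sumEFin lee_fin ler_pdivlMr // mulrC geo_tail_partial_sum.
case: ifP => _; last by rewrite mulr_ge0 // exprn_ge0 // ltW.
by rewrite ler_wpM2l // lerBlDr lerDl exprn_ge0 // ltW.
Qed.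

End Geometric.

Section Metric.
Variables (R : realType) (T : Type) (d : T -> T -> R).
Hypothesis d_metric : is_metric d.

Lemma metric_ge0 x y : 0 <= d x y.
Proof. by case: d_metric. Qed.

Lemma metric_sym x y : d x y = d y x.
Proof. by case: d_metric => _ [_ []]. Qed.

Lemma metric_triangle x y z : d x z <= d x y + d y z.
Proof. by case: d_metric => _ [_ [_]]. Qed.

Lemma metric_xx x : d x x = 0.
Proof. by case: d_metric => _ [h _]; apply/h. Qed.

Lemma metric_eq0 x y : d x y = 0 -> x = y.
Proof. by case: d_metric => _ [h _]; move/h. Qed.

Lemma mconv_uniq (u : nat -> T) F F' : mconv d u F -> mconv d u F' -> F = F'.
Proof.
move=> hF hF'; apply: metric_eq0; apply/eqP; rewrite eq_le metric_ge0 andbT.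
apply/ler_addgt0Pr => e e0; rewrite add0r.
have e2 : 0 < e / 2 by rewrite divr_gt0.
have [n1 hn1] := hF _ e2; have [n2 hn2] := hF' _ e2.
apply: le_trans (metric_triangle F (u (maxn n1 n2)) F') _.
rewrite metric_sym (splitr e); apply/ltW/ltrD.
  by apply: hn1; rewrite leq_maxl.
by apply: hn2; rewrite leq_maxr.
Qed.

Lemma mconv_dist0 (u v : nat -> T) F : mconv d u F ->
  (fun n => d (u n) (v n)) @ \oo --> 0 -> mconv d v F.
Proof.
move=> hu /cvgrPdist_lt huv e e0.
have e2 : 0 < e / 2 by rewrite divr_gt0.
have [n1 hn1] := hu _ e2; have [n2 _ hn2] := huv _ e2.
exists (maxn n1 n2) => n; rewrite geq_max => /andP [h1 h2].
apply: le_lt_trans (metric_triangle (v n) (u n) F) _.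
rewrite (splitr e) metric_sym; apply: ltrD; last exact: hn1.
by have := hn2 n h2; rewrite /= sub0r normrN ger0_norm ?metric_ge0.
Qed.

Section GeometricIncrements.
Variables (q : R) (u : nat -> T) (k : nat).
Hypotheses (q_gt0 : 0 < q) (q_lt1 : q < 1).
Hypothesis u_step : forall n, (k <= n)%N -> d (u n.+1) (u n) <= q ^+ n.

Lemma geo_dist_le m p : (k <= m)%N -> d (u m) (u (m + p)) <= q ^+ m / (1 - q).
Proof.
move=> km; have q1 : 0 < 1 - q by rewrite subr_gt0.
rewrite ler_pdivlMr // mulrC.
suff : (1 - q) * d (u m) (u (m + p)) <= q ^+ m - q ^+ (m + p).
  by move/le_trans; apply; rewrite lerBlDr lerDl exprn_ge0 // ltW.
elim: p => [|p IH]; first by rewrite addn0 metric_xx subrr mulr0.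
have step := u_step (leq_trans km (leq_addr p m)).
have tri := metric_triangle (u m) (u (m + p)) (u (m + p).+1).
rewrite [d (u (m + p)) _]metric_sym in tri.
rewrite addnS; apply: le_trans (ler_wpM2l (ltW q1) tri) _.
have := ler_wpM2l (ltW q1) step; rewrite mulrDr exprS.
set X := d (u m) (u (m + p)) in IH *; set Y := d (u (m + p).+1) (u (m + p)).
set Z := q ^+ (m + p) in IH *.
nra.
Qed.

Lemma geo_mcauchy : mcauchy d u.
Proof.
move=> e e0.
have [n1 hn1] := exists_geo_tail_lt q_gt0 q_lt1 (ler0n _ 2) e0.
set r := maxn k n1; have kr : (k <= r)%N by rewrite leq_maxl.
exists r => n n' rn rn'.
apply: le_lt_trans (metric_triangle (u n) (u r) (u n')) _.
rewrite metric_sym -(subnKC rn) -(subnKC rn'); apply: le_lt_trans hn1.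
apply: le_trans (lerD (geo_dist_le (n - r) kr) (geo_dist_le (n' - r) kr)) _.
have qr : q ^+ r <= q ^+ n1.
  by apply: ler_wiXn2l; [exact: ltW | exact: ltW | exact: leq_maxr].
rewrite -mulrDl; apply: ler_wpM2r; first by rewrite invr_ge0 subr_ge0 ltW.
rewrite -mulr2n; lra.
Qed.

Lemma geo_mconv_dist_le F m : mconv d u F -> (k <= m)%N ->
  d F (u m) <= q ^+ m / (1 - q).
Proof.
move=> hF km; apply/ler_addgt0Pr => e e0.
have [n1 hn1] := hF e e0.
set n := maxn n1 m; have mn : (m <= n)%N by rewrite leq_maxr.
apply: le_trans (metric_triangle F (u n) (u m)) _.
rewrite addrC [d (u n) _]metric_sym [d F _]metric_sym lerD //.
  by rewrite -(subnKC mn); exact: geo_dist_le.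
by rewrite ltW // hn1 // leq_maxl.
Qed.

End GeometricIncrements.

End Metric.

Section ShiftSpace.
Variables (R : realType) (E : Type).
Implicit Types s : Sig E.

Lemma half_gt0 : 0 < (2^-1 : R).
Proof. by rewrite invr_gt0 ltr0n. Qed.

Lemma half_lt1 : (2^-1 : R) < 1.
Proof. by rewrite invf_lt1 ?ltr0n // ltr1n. Qed.

Lemma agree_upto_le s s' k1 k2 :
  agree_upto s s' k1 -> (k2 <= k1)%N -> agree_upto s s' k2.
Proof. by move=> h k21 j hj; apply: h; apply: leq_trans hj k21. Qed.

Lemma dsig_cases s s' :
  (s = s' /\ dsig R s s' = 0) \/
  exists n, dsig R s s' = (2^-1) ^+ n /\ agree_upto s s' n.
Proof.
rewrite /dsig; case: pselect => [h|h].
  right; case: ex_minnP => n hn hmin; exists n; split => //.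
  case: n hn hmin => [|n] hn hmin; first by move=> j.
  apply/not_notP => hna.
  by have := hmin n (introN (asboolP _) hna); rewrite ltnn.
left; split => //; apply/funext => j.
have : agree_upto s s' `|j|.+1.
  by apply/not_notP => hn; apply: h; exists `|j|%N.
by move/(_ j (ltnSn _)).
Qed.

Lemma agree_upto_dsig_lt s s' k :
  dsig R s s' < (2^-1) ^+ k -> agree_upto s s' k.
Proof.
case: (dsig_cases s s') => [[-> _]|[n [-> ha]]]; first by [].
rewrite ltr_iXn2l ?half_gt0 ?half_lt1 // => kn.
exact: agree_upto_le ha (ltnW kn).
Qed.

Definition sig_word (m : int) (k : nat) s : seq E :=
  [seq s (m + j%:Z) | j <- iota 0 k].

Definition word_set (m : int) (k : nat) (P : pred (seq E)) : set (Sig E) :=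
  [set s | P (sig_word m k s)].

Lemma size_sig_word m k s : size (sig_word m k s) = k.
Proof. by rewrite size_map size_iota. Qed.

Lemma cyl_sig_word m l s : cyl m l s <-> sig_word m (size l) s = l.
Proof.
split=> [h|h].
  apply: (@eq_from_nth _ (s m)); first by rewrite size_sig_word.
  move=> i; rewrite size_sig_word => hi.
  rewrite (nth_map 0%N) ?size_iota // nth_iota // add0n.
  by symmetry; apply: onth_nth; rewrite -h.
move=> j hj; rewrite -h onthE (nth_map (s m)) ?size_sig_word //.
by rewrite (nth_map 0%N) ?size_iota // nth_iota.
Qed.

Lemma sig_word_S m k s : sig_word m k.+1 s = s m :: sig_word (m + 1) k s.
Proof.
rewrite /sig_word /= addr0; congr (_ :: _).
rewrite -(addn0 1%N) iotaDl -map_comp; apply: eq_map => j /=.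
by rewrite PoszD addrA.
Qed.

Lemma sig_word_rcons m k s :
  sig_word m k.+1 s = rcons (sig_word m k s) (s (m + k%:Z)).
Proof. by rewrite /sig_word -addn1 iotaD map_cat /= cats1 add0n. Qed.

Lemma behead_sig_word n s :
  behead (sig_word (- n.+1%:Z) n.+2 s) = sig_word (- n%:Z) n.+1 s.
Proof.
rewrite sig_word_S /=.
by have -> : - n.+1%:Z + 1 = - n%:Z by rewrite -addn1 PoszD opprD addrNK.
Qed.

Lemma sig_word_agree s s' k n : agree_upto s s' k -> (n < k)%N ->
  sig_word (- n%:Z) n.+1 s = sig_word (- n%:Z) n.+1 s'.
Proof.
move=> ha nk; apply/eq_in_map => j; rewrite mem_iota add0n => /andP [_ jn].
apply: ha; rewrite addrC -opprB subzn // abszN absz_nat.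
exact: leq_ltn_trans (leq_subr j n) nk.
Qed.

End ShiftSpace.

Section WordSets.
Variables (E : finType) (m : int) (k : nat) (P : pred (seq E)).
Let ws := [seq l <- words E k.+1 | P l].

(* Enumerates [word_set m k.+1 P] as a disjoint sequence of cylinders. *)
Definition word_cyl (j : nat) : set (Sig E) :=
  if (j < size [seq l <- words E k.+1 | P l])%N
  then cyl m (nth [::] [seq l <- words E k.+1 | P l] j) else set0.

Let mem_ws l : (l \in ws) = P l && (size l == k.+1).
Proof. by rewrite mem_filter mem_words. Qed.

Let size_nth_ws j : (j < size ws)%N -> size (nth [::] ws j) = k.+1.
Proof. by move=> hj; have := mem_nth [::] hj; rewrite mem_ws => /andP [_ /eqP]. Qed.

Lemma word_set_bigcup : word_set m k.+1 P = \bigcup_j word_cyl j.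
Proof.
apply/seteqP; split => s.
  rewrite /word_set /= => hs.
  have hin : sig_word m k.+1 s \in ws by rewrite mem_ws hs size_sig_word eqxx.
  exists (index (sig_word m k.+1 s) ws) => //.
  rewrite /word_cyl -/ws index_mem hin; apply/cyl_sig_word.
  by rewrite nth_index // size_sig_word.
move=> [j _]; rewrite /word_cyl -/ws /word_set /=.
case: ifP => // hj /cyl_sig_word; rewrite size_nth_ws // => ->.
by have := mem_nth [::] hj; rewrite mem_ws => /andP [].
Qed.

Lemma Asig_word_cyl j : Asig m (word_cyl j).
Proof.
rewrite /word_cyl -/ws; case: ifP => hj; last exact: sigma_algebra0.
apply: sub_sigma_algebra; move: (size_nth_ws hj).
by case: (nth [::] ws j) => [//|e l] _; exists e => //; exists l.
Qed.

Lemma trivIset_word_cyl : trivIset setT word_cyl.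
Proof.
move=> i j _ _ [s []]; rewrite /word_cyl -/ws.
case: ifP => // hi; case: ifP => // hj.
move=> /cyl_sig_word h1 /cyl_sig_word h2.
rewrite size_nth_ws // in h1; rewrite size_nth_ws // in h2.
apply/eqP; rewrite -(nth_uniq [::] hi hj) ?filter_uniq ?uniq_words //.
by rewrite -h1 -h2.
Qed.

Lemma Asig_word_set : Asig m (word_set m k.+1 P).
Proof. by rewrite word_set_bigcup; apply: sigma_algebra_bigcup Asig_word_cyl. Qed.

End WordSets.

Section CMSFacts.
Variables (R : realType) (K : Type) (E : finType) (N : nat) (M : CMS R K E N).
Local Notation d := (cms_d M).
Local Notation w := (cms_w M).
Local Notation p := (cms_p M).
Local Notation Kp := (cms_Kp M).
Local Notation a := (cms_a M).
Let d_metric := cms_metric M.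

Lemma cms_Kp_uniq j j' x : Kp j x -> Kp j' x -> j = j'.
Proof.
move=> h h'; apply/eqP; apply/negPn/negP => /(cms_Kp_disj M) hd.
by have : (Kp j `&` Kp j') x by []; rewrite hd.
Qed.

Lemma cms_p_neq0 e x : p e x != 0 -> Kp (cms_i M e) x.
Proof. by move=> h; apply/not_notP => hn; move: h; rewrite (cms_p_supp hn) eqxx. Qed.

Lemma cms_w_in e x : Kp (cms_i M e) x -> Kp (cms_t M e) (w e x).
Proof. by move=> h; apply: cms_w_maps; exists x. Qed.

Lemma pcyl_ge0 x l : 0 <= pcyl M x l.
Proof. by elim: l x => [|e l IH] x /=; rewrite ?ler01 // mulr_ge0 // cms_p_ge0. Qed.

Lemma pcyl_cons_neq0 x e l : pcyl M x (e :: l) != 0 -> Kp (cms_i M e) x.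
Proof. by move=> h; apply: cms_p_neq0; apply: contraNneq h => /= ->; rewrite mul0r. Qed.

Definition run (x : K) (l : seq E) : K := foldl (fun z e => w e z) x l.

Lemma sum_pcyl_contraction n x y j : Kp j x -> Kp j y ->
  \sum_(l <- words E n) pcyl M x l * d (run x l) (run y l) <= a ^+ n * d x y.
Proof.
elim: n x y j => [|n IH] x y j hx hy; first by rewrite /= big_seq1 /= mul1r.
rewrite big_words_S.
apply: (@le_trans _ _ (\sum_(e : E) p e x * (a ^+ n * d (w e x) (w e y)))).
  apply: ler_sum => e _.
  rewrite (eq_bigr (fun l => p e x * (pcyl M (w e x) l *
    d (run (w e x) l) (run (w e y) l)))); last by move=> l _; rewrite mulrA.
  rewrite -big_distrr /=.
  have [->|pe] := eqVneq (p e x) 0; first by rewrite !mul0r.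
  apply: ler_wpM2l; first exact: cms_p_ge0.
  have hxe := cms_p_neq0 pe; have ej := cms_Kp_uniq hx hxe; subst j.
  exact: IH (cms_w_in hxe) (cms_w_in hy).
under eq_bigr do rewrite mulrCA.
rewrite -big_distrr /= exprS -mulrA [X in _ <= X]mulrCA.
apply: ler_wpM2l; first by rewrite exprn_ge0 // ltW // cms_a_gt0.
exact: cms_contr hx hy.
Qed.

Definition rate : R := Num.sqrt a.

Lemma rate_gt0 : 0 < rate.
Proof. by rewrite sqrtr_gt0 cms_a_gt0. Qed.

Lemma rate_lt1 : rate < 1.
Proof. by rewrite -sqrtr1 ltr_sqrt ?ltr01 // cms_a_lt1. Qed.

Lemma rate_sqr : rate ^+ 2 = a.
Proof. by rewrite sqr_sqrtr // ltW // cms_a_gt0. Qed.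

(* Markov's inequality at threshold rate^n turns a^(n+1) into rate^(n+2). *)
Lemma rate_markov n : (rate ^+ n)^-1 * a ^+ n.+1 <= rate ^+ n.+1.
Proof.
rewrite -rate_sqr -exprM.
have -> : (2 * n.+1 = n + n.+2)%N by lia.
rewrite exprD mulKf ?expf_neq0 ?gt_eqF ?rate_gt0 // [X in X <= _]exprS.
by rewrite ler_piMl ?exprn_ge0 ?ltW ?rate_gt0 ?rate_lt1.
Qed.

Definition holder_exp : R := ln rate / ln (2^-1).

Definition holder_const : R := 2 / (rate * (1 - rate)).

Lemma holder_exp_gt0 : 0 < holder_exp.
Proof.
rewrite /holder_exp -divrNN divr_gt0 // oppr_gt0 ln_lt0 //.
  by rewrite rate_gt0 rate_lt1.
by rewrite half_gt0 half_lt1.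
Qed.

Lemma holder_const_gt0 : 0 < holder_const.
Proof. by rewrite divr_gt0 // mulr_gt0 ?rate_gt0 // subr_gt0 rate_lt1. Qed.

Lemma half_expr_powR n : ((2^-1) ^+ n) `^ holder_exp = rate ^+ n.
Proof.
rewrite /powR expf_eq0 gt_eqF ?half_gt0 ?andbF //.
rewrite lnXn ?half_gt0 // mulrnAr /holder_exp mulfVK; last first.
  by rewrite lt_eqF // ln_lt0 // half_gt0 half_lt1.
by rewrite -mulr_natl expRM_natl lnK // posrE rate_gt0.
Qed.

Section Yword.
Variable e0 : E.

(* [e0] is a dummy head for the empty word, which never arises from [Y0]. *)
Definition Yword (us : 'I_N -> K) (l : seq E) : K :=
  run (us (cms_i M (head e0 l))) l.

Lemma Yit_word us m k s : Yit M us m k s = Yword us (sig_word m k.+1 s).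
Proof.
elim: k => [|k IH]; first by rewrite /Yword /sig_word /= addr0.
rewrite [sig_word m k.+2 s]sig_word_rcons /Yword /run foldl_rcons -/(run _ _).
by rewrite [Yit _ _ _ _ _]/= IH /Yword sig_word_S.
Qed.

Lemma Y0_word us n s : Y0 M us n s = Yword us (sig_word (- n%:Z) n.+1 s).
Proof. exact: Yit_word. Qed.

Lemma sum_pcyl_Yword x j us n (G : seq E -> K -> R) : Kp j x ->
  \sum_(l <- words E n.+1) pcyl M x l * G l (Yword us l) =
  \sum_(l <- words E n.+1) pcyl M x l * G l (run (us j) l).
Proof.
move=> hx; apply: eq_big_seq => l; rewrite mem_words; case: l => [//|e l] _.
have [->|/pcyl_cons_neq0 he] := eqVneq (pcyl M x (e :: l)) 0; first by rewrite !mul0r.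
by rewrite /Yword /= (cms_Kp_uniq hx he).
Qed.

End Yword.

Lemma Y0_agree_upto us s s' k n : agree_upto s s' k -> (n < k)%N ->
  Y0 M us n s = Y0 M us n s'.
Proof. by move=> ha nk; rewrite !(Y0_word (s 0)) (sig_word_agree ha nk). Qed.

Section OuterMeasure.
Variable Pm : int -> K -> set (Sig E) -> \bar R.
Hypothesis hP : is_Pfamily M Pm.

Lemma Pm_word_set m k P x : (m <= 0)%R ->
  Pm m x (word_set m k.+1 P) = (\sum_(l <- words E k.+1 | P l) pcyl M x l)%:E.
Proof.
move=> m0; have [Pm0 _ Pm_sigma _ Pm_cyl] := hP x m0.
set ws := [seq l <- words E k.+1 | P l].
have lim := Pm_sigma _ (@Asig_word_cyl _ m k P) (@trivIset_word_cyl _ m k P).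
have lim' : (fun n => \sum_(j < n) Pm m x (word_cyl m k P j))%E @ \oo -->
            (\sum_(j < size ws) Pm m x (word_cyl m k P j))%E.
  apply: cvg_near_cst; near=> n.
  have hn : (size ws <= n)%N by near: n; exists (size ws).
  rewrite -!(big_mkord xpredT (fun j => Pm m x (word_cyl m k P j))).
  rewrite (big_cat_nat (leq0n (size ws)) hn) /= [X in (_ + X)%E]big1_seq ?adde0 //.
  move=> j /andP [_]; rewrite mem_index_iota => /andP [hj _].
  by rewrite /word_cyl -/ws ltnNge hj.
rewrite word_set_bigcup (cvg_unique (@ereal_hausdorff R) lim lim') //.
rewrite -sumEFin -[in RHS]big_filter -/ws [in RHS](big_nth [::]) [in RHS]big_mkord.
apply: eq_bigr => j _; rewrite /word_cyl -/ws ltn_ord.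
have := mem_nth [::] (ltn_ord j); rewrite mem_filter mem_words => /andP [_].
by case: (nth [::] ws j) => [//|e l] _; rewrite Pm_cyl.
Unshelve. all: by end_near.
Qed.

Lemma Phim_word_set_le (us : 'I_N -> K) m k P c : (m <= 0)%R -> 0 <= c ->
  (forall i, \sum_(l <- words E k.+1 | P l) pcyl M (us i) l <= c) ->
  (Phim Pm us m (word_set m k.+1 P) <= c%:E)%E.
Proof.
move=> m0 c0 hc; rewrite /Phim.
under eq_bigr do rewrite Pm_word_set //.
rewrite sumEFin -EFinM lee_fin.
apply: (@le_trans _ _ (N%:R^-1 * \sum_(i < N) c)).
  by apply: ler_wpM2l; [rewrite invr_ge0 ler0n | exact: ler_sum].
rewrite sumr_const card_ord -[c *+ N]mulr_natr mulrCA mulrC.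
have NN : N%:R^-1 * N%:R <= 1 :> R.
  by have [->|hN] := eqVneq N 0%N; rewrite ?mulr0 ?ler01 // mulVf ?pnatr_eq0.
by rewrite -[X in _ <= X]mul1r ler_wpM2r.
Qed.

Lemma Phim_ge0 (us : 'I_N -> K) m A : (m <= 0)%R -> Asig m A -> (0 <= Phim Pm us m A)%E.
Proof.
move=> m0 hA; rewrite /Phim mule_ge0 ?lee_fin ?invr_ge0 ?ler0n //.
by apply: sume_ge0 => i _; have [_ h _ _ _] := hP (us i) m0; exact: h.
Qed.

Lemma Pout_ge0 (us : 'I_N -> K) B : (0 <= Pout Pm us B)%E.
Proof.
apply/ereal_infP => _ [A [hA _] <-].
by apply: nneseries_ge0 => n _ _; apply: Phim_ge0; rewrite ?oppr_le0.
Qed.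

Lemma Pout_le (us : 'I_N -> K) B (A : nat -> set (Sig E)) :
  (forall n, Asig (- n%:Z) (A n)) -> B `<=` \bigcup_n A n ->
  (Pout Pm us B <= \sum_(0 <= n <oo) Phim Pm us (- n%:Z) (A n))%E.
Proof. by move=> hA hB; apply: ereal_inf_lbound; exists A. Qed.

Lemma Pout_eq0 (us : 'I_N -> K) B :
  (forall eps : R, 0 < eps -> (Pout Pm us B <= eps%:E)%E) -> Pout Pm us B = 0%E.
Proof.
move=> h; apply/eqP; rewrite eq_le Pout_ge0 andbT.
by apply/lee_addgt0Pr => e e0; rewrite add0e; exact: h.
Qed.

(* Without edges [Sig E] is empty and every outer measure vanishes. *)
Lemma Pout_le_inhabited (us : 'I_N -> K) B c : (0 <= c)%E ->
  (E -> (Pout Pm us B <= c)%E) -> (Pout Pm us B <= c)%E.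
Proof.
move=> c0 hc; have [e0 _|noE] := pickP (@predT E); first exact: hc.
apply: (le_trans _ c0).
have A0 n : Asig (- n%:Z) (@set0 (Sig E)) by exact: sigma_algebra0.
apply: le_trans (Pout_le us A0 _) _; first by move=> s; have := noE (s 0).
rewrite eseries0 // => n _ _; rewrite /Phim big1 ?mule0 // => i _.
by have [h0 _ _ _ _] := hP (us i) (oppr_le0 _ : - n%:Z <= 0); rewrite h0.
Qed.

Lemma Pout_word_cover (q : R) (us : 'I_N -> K) B (Pf : nat -> pred (seq E)) C n0 :
  0 < q -> q < 1 -> 0 <= C ->
  (forall m i, \sum_(l <- words E m.+1 | Pf m l) pcyl M (us i) l <= C * q ^+ m) ->
  B `<=` \bigcup_m word_set (- m%:Z) m.+1 (fun l => (n0 <= m)%N && Pf m l) ->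
  (Pout Pm us B <= (C * q ^+ n0 / (1 - q))%:E)%E.
Proof.
move=> q0 q1 C0 hmass hB.
apply: le_trans (Pout_le us (fun n => @Asig_word_set _ _ n _) hB) _.
apply: (nneseries_geo_le q0 q1 C0) => [n|n].
  by apply: Phim_ge0; rewrite ?oppr_le0 //; exact: Asig_word_set.
apply: Phim_word_set_le; rewrite ?oppr_le0 //.
  by case: ifP => // _; rewrite mulr_ge0 // exprn_ge0 // ltW.
move=> i; case: ifP => _ /=; first exact: hmass.
by rewrite big_pred0.
Qed.

End OuterMeasure.

Section Convergence.
Variable Pm : int -> K -> set (Sig E) -> \bar R.
Hypothesis hP : is_Pfamily M Pm.
Variables xs ys : 'I_N -> K.
Hypotheses (hxs : forall i, Kp i (xs i)) (hys : forall i, Kp i (ys i)).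

Definition Dcross : R := \sum_i d (xs i) (ys i).

Definition Dstep : R := \sum_(e : E) d (w e (xs (cms_i M e))) (xs (cms_t M e)).

Lemma Dcross_ge0 : 0 <= Dcross.
Proof. by apply: sumr_ge0 => i _; exact: metric_ge0 d_metric _ _. Qed.

Lemma Dstep_ge0 : 0 <= Dstep.
Proof. by apply: sumr_ge0 => e _; exact: metric_ge0 d_metric _ _. Qed.

Definition Q (k : nat) : set (Sig E) :=
  [set s | forall n, (k <= n)%N -> d (Y0 M xs n.+1 s) (Y0 M xs n s) <= rate ^+ n].

Definition Bfar : set (Sig E) :=
  [set s | forall n0, exists2 n, (n0 <= n)%N &
     rate ^+ n < d (Y0 M xs n s) (Y0 M ys n s)].

Definition Bad : set (Sig E) := Bfar `|` [set s | forall k, ~ Q k s].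

Section Masses.
Variable e0 : E.
Local Notation Yword := (Yword e0).

Definition far_word (m : nat) : pred (seq E) :=
  fun l => rate ^+ m < d (Yword xs l) (Yword ys l).

(* [jump_word n.+1] concerns d(Y_{-n-1,0}, Y_{-n,0}), read off a word of
   length n + 2; there is no increment at level 0. *)
Definition jump_word (m : nat) : pred (seq E) :=
  fun l => if m is n.+1 then rate ^+ n < d (Yword xs l) (Yword xs (behead l))
           else false.

Lemma sum_pcyl_dist_Yword i n :
  \sum_(l <- words E n.+1) pcyl M (xs i) l * d (Yword xs l) (Yword ys l) <=
  a ^+ n.+1 * d (xs i) (ys i).
Proof.
rewrite (sum_pcyl_Yword e0 _ _ (fun l y => d y (Yword ys l)) (hxs i)).
rewrite (sum_pcyl_Yword e0 _ _ (fun l y => d (run (xs i) l) y) (hxs i)).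
exact: sum_pcyl_contraction (hxs i) (hys i).
Qed.

Lemma sum_pcyl_dist_Yword_behead i n :
  \sum_(l <- words E n.+2) pcyl M (xs i) l * d (Yword xs l) (Yword xs (behead l)) <=
  a ^+ n.+1 * Dstep.
Proof.
rewrite big_words_S.
apply: (@le_trans _ _ (\sum_(e : E) p e (xs i) * (a ^+ n.+1 * Dstep))); last first.
  by rewrite -big_distrl /= cms_p_sum1 mul1r.
apply: ler_sum => e _.
rewrite (eq_bigr (fun l => p e (xs i) * (pcyl M (w e (xs i)) l *
  d (run (w e (xs (cms_i M e))) l) (Yword xs l)))); last first.
  by move=> l _; rewrite /= mulrA.
rewrite -big_distrr /=.
have [->|pe] := eqVneq (p e (xs i)) 0; first by rewrite !mul0r.
apply: ler_wpM2l; first exact: cms_p_ge0.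
have hxe := cms_p_neq0 pe; have ie := cms_Kp_uniq (hxs i) hxe; rewrite -ie.
have hwx := cms_w_in hxe.
rewrite (sum_pcyl_Yword e0 _ _ (fun l y => d (run (w e (xs i)) l) y) hwx).
apply: le_trans (sum_pcyl_contraction _ hwx (hxs _)) _.
apply: ler_wpM2l; first by rewrite exprn_ge0 // ltW // cms_a_gt0.
rewrite /Dstep (bigD1 e) //= -ie lerDl.
by apply: sumr_ge0 => ? _; exact: metric_ge0 d_metric _ _.
Qed.

Lemma far_word_mass m i :
  \sum_(l <- words E m.+1 | far_word m l) pcyl M (xs i) l <= Dcross * rate ^+ m.
Proof.
have rm : 0 < rate ^+ m by rewrite exprn_gt0 // rate_gt0.
have d0 := metric_ge0 d_metric.
apply: le_trans (markov_sum _ (pcyl_ge0 (xs i)) rm (fun l => d0 _ _)) _.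
have irm : 0 <= (rate ^+ m)^-1 by rewrite invr_ge0 ltW.
apply: le_trans (ler_wpM2l irm (sum_pcyl_dist_Yword i m)) _.
rewrite mulrA; apply: le_trans (ler_wpM2r (d0 _ _) (rate_markov m)) _.
rewrite mulrC; apply: ler_pM => //; first by rewrite exprn_ge0 // ltW // rate_gt0.
  by rewrite /Dcross (bigD1 i) //= lerDl; apply: sumr_ge0 => ? _; exact: d0.
by rewrite exprS ler_piMl ?exprn_ge0 ?ltW ?rate_gt0 ?rate_lt1.
Qed.

Lemma jump_word_mass m i :
  \sum_(l <- words E m.+1 | jump_word m l) pcyl M (xs i) l <= Dstep * rate ^+ m.
Proof.
case: m => [|n]; first by rewrite big_pred0 // expr0 mulr1 Dstep_ge0.
have rn : 0 < rate ^+ n by rewrite exprn_gt0 // rate_gt0.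
apply: le_trans (markov_sum _ (pcyl_ge0 (xs i)) rn (fun l => metric_ge0 d_metric _ _)) _.
have irn : 0 <= (rate ^+ n)^-1 by rewrite invr_ge0 ltW.
apply: le_trans (ler_wpM2l irn (sum_pcyl_dist_Yword_behead i n)) _.
rewrite mulrA mulrC; apply: ler_wpM2l; [exact: Dstep_ge0 | exact: rate_markov].
Qed.

Lemma notQ_jump_word k s : ~ Q k s ->
  exists2 n, (k <= n)%N & jump_word n.+1 (sig_word (- n.+1%:Z) n.+2 s).
Proof.
move/existsNP => [n /not_implyP [kn hn]]; exists n => //.
by rewrite /jump_word behead_sig_word -!Y0_word ltNge; exact/negP.
Qed.

End Masses.

Lemma Bad_null : Pout Pm xs Bad = 0%E.
Proof.
apply: (Pout_eq0 hP) => eps eps0.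
apply: (Pout_le_inhabited hP) => [|e0]; first by rewrite lee_fin ltW.
have C0 : 0 <= Dcross + Dstep by rewrite addr_ge0 ?Dcross_ge0 ?Dstep_ge0.
have [n0 hn0] := exists_geo_tail_lt rate_gt0 rate_lt1 C0 eps0.
apply: le_trans (Pout_word_cover hP (Pf := fun m l => far_word e0 m l || jump_word e0 m l)
  (n0 := n0) rate_gt0 rate_lt1 C0 _ _) _; last by rewrite lee_fin ltW.
  move=> m i; apply: le_trans (sum_orb_le _ (pcyl_ge0 (xs i)) _ _) _.
  by rewrite mulrDl lerD ?far_word_mass ?jump_word_mass.
move=> s [hs|hs].
  have [n hn hd] := hs n0; exists n => //.
  by rewrite /word_set /= hn /far_word -!Y0_word hd.
have [n hn hjump] := notQ_jump_word e0 (hs n0); exists n.+1 => //.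
by apply/andP; split; [exact: ltnW | apply/orP; right].
Qed.

Lemma Q_compl_le k :
  (Pout Pm xs (~` Q k) <= (Dstep * rate ^+ k.+1 / (1 - rate))%:E)%E.
Proof.
apply: (Pout_le_inhabited hP) => [|e0].
  rewrite lee_fin; apply: mulr_ge0; last by rewrite invr_ge0 subr_ge0 ltW // rate_lt1.
  by rewrite mulr_ge0 ?Dstep_ge0 // exprn_ge0 // ltW // rate_gt0.
apply: (Pout_word_cover hP (Pf := jump_word e0) (n0 := k.+1) rate_gt0 rate_lt1 Dstep_ge0 (jump_word_mass e0)).
move=> s /(notQ_jump_word e0) [n kn hjump]; exists n.+1 => //.
by apply/andP; split.
Qed.

Lemma Q_compl_summable : (\sum_(0 <= k <oo) Pout Pm xs (~` Q k) < +oo)%E.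
Proof.
have r0 := rate_gt0; have r1 : 0 < 1 - rate by rewrite subr_gt0 rate_lt1.
apply: le_lt_trans (ltry ((Dstep * rate / (1 - rate)) * rate ^+ 0 / (1 - rate))).
apply: (nneseries_geo_le rate_gt0 rate_lt1 (n0 := 0)) => [||k].
- by rewrite !mulr_ge0 ?Dstep_ge0 ?invr_ge0 ?ltW.
- by move=> k; exact: (Pout_ge0 hP).
- by rewrite /= (le_trans (Q_compl_le k)) // lee_fin exprS mulrA mulrAC.
Qed.

Lemma Q_mconv k s : Q k s -> exists F, mconv d (fun n => Y0 M xs n s) F.
Proof.
move=> hQ; apply: cms_complete.
exact: (geo_mcauchy (u := fun n => Y0 M xs n s) d_metric rate_gt0 rate_lt1 hQ).
Qed.

Lemma Q_closed k : sig_closed R (Q k).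
Proof.
move=> s hs n kn.
have [s' hs' /agree_upto_dsig_lt ha] := hs _ (exprn_gt0 n.+2 (half_gt0 R)).
by rewrite !(Y0_agree_upto _ ha) //; apply: hs'.
Qed.

Lemma Q_holder k s s' F F' : Q k s -> Q k s' -> dsig R s s' <= (2^-1) ^+ k.+1 ->
  mconv d (fun n => Y0 M xs n s) F -> mconv d (fun n => Y0 M xs n s') F' ->
  d F F' <= holder_const * (dsig R s s') `^ holder_exp.
Proof.
move=> hQ hQ' hds hF hF'.
case: (dsig_cases R s s') hds => [[ss' _]|[n [-> ha]]] hds.
  subst s'; rewrite (mconv_uniq d_metric hF hF') (metric_xx d_metric).
  by rewrite mulr_ge0 ?powR_ge0 // ltW // holder_const_gt0.
move: hds; rewrite ler_iXn2l ?half_gt0 ?half_lt1 //.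
case: n ha => [//|m] ha km.
have dF := geo_mconv_dist_le (u := fun n => Y0 M xs n s) d_metric rate_gt0 rate_lt1 hQ hF km.
have dF' := geo_mconv_dist_le (u := fun n => Y0 M xs n s') d_metric rate_gt0 rate_lt1 hQ' hF' km.
rewrite (Y0_agree_upto _ ha (ltnSn m)) in dF.
apply: le_trans (metric_triangle d_metric F (Y0 M xs m s') F') _.
rewrite [d _ F'](metric_sym d_metric); apply: le_trans (lerD dF dF') _.
rewrite half_expr_powR /holder_const exprS.
have r0 := rate_gt0; have r1 : 0 < 1 - rate by rewrite subr_gt0 rate_lt1.
suff -> : 2 / (rate * (1 - rate)) * (rate * rate ^+ m) =
          rate ^+ m / (1 - rate) + rate ^+ m / (1 - rate) by [].
by field; rewrite gt_eqF // gt_eqF.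
Qed.

Lemma notBad_dist_cvg0 s : ~ Bad s ->
  (fun n => d (Y0 M xs n s) (Y0 M ys n s)) @ \oo --> 0.
Proof.
move=> /not_orP [/existsNP [n0 hn0] _].
apply: (cvg0_expr_bound rate_gt0 rate_lt1 (n0 := n0)) => [n|n n0n].
  exact: metric_ge0 d_metric _ _.
by rewrite leNgt; apply/negP => hlt; apply: hn0; exists n.
Qed.

Lemma notBad_mconv s : ~ Bad s -> exists F,
  mconv d (fun n => Y0 M xs n s) F /\ mconv d (fun n => Y0 M ys n s) F.
Proof.
move=> hs; have /not_orP [_ /existsNP [k /contrapT hQ]] := hs.
have [F hF] := Q_mconv hQ; exists F; split => //.
exact: (mconv_dist0 d_metric hF (notBad_dist_cvg0 hs)).
Qed.

End Convergence.

End CMSFacts.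

Unset Implicit Arguments.

Theorem lemma3 (R : realType) (K : Type) (E : finType) (N : nat)
  (M : CMS R K E N) (Pm : int -> K -> set (Sig E) -> \bar R)
  (xs ys : 'I_N -> K) :
  is_Pfamily M Pm ->
  (forall i, cms_Kp M i (xs i)) -> (forall i, cms_Kp M i (ys i)) ->
  (* (i) *)
  (exists B, Pout Pm xs B = 0%E /\
     forall s, ~ B s ->
       (fun n => cms_d M (Y0 M xs n s) (Y0 M ys n s)) @ \oo --> (0 : R)) /\
  (* (ii) *)
  (exists B, Pout Pm xs B = 0%E /\
     forall s, ~ B s -> exists F,
       mconv (cms_d M) (fun n => Y0 M xs n s) F /\
       mconv (cms_d M) (fun n => Y0 M ys n s) F) /\
  (* (iii) *)
  (exists (Q : nat -> set (Sig E)) (alpha C : R),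
     (forall k, sig_closed R (Q k)) /\
     (forall k, Q k `<=` Q k.+1) /\
     (\sum_(0 <= k <oo) Pout Pm xs (~` Q k) < +oo)%E /\
     0 < alpha /\ 0 < C /\
     forall k, exists2 delta : R, 0 < delta &
       (forall s, Q k s -> exists F, mconv (cms_d M) (fun n => Y0 M xs n s) F) /\
       (forall s s' F F', Q k s -> Q k s' -> dsig R s s' <= delta ->
          mconv (cms_d M) (fun n => Y0 M xs n s) F ->
          mconv (cms_d M) (fun n => Y0 M xs n s') F' ->
          cms_d M F F' <= C * (dsig R s s') `^ alpha)).
Proof.
move=> hP hxs hys.
have Bad0 := Bad_null hP hxs hys.
split; [|split].
- by exists (Bad M xs ys); split=> // s; exact: notBad_dist_cvg0.
- by exists (Bad M xs ys); split=> // s; exact: notBad_mconv.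
exists (Q M xs), (holder_exp M), (holder_const M).
split; first exact: Q_closed.
split; first by move=> k s hs n kn; apply: hs; exact: ltnW.
split; first exact: Q_compl_summable.
split; first exact: holder_exp_gt0.
split; first exact: holder_const_gt0.
move=> k; exists ((2^-1) ^+ k.+1); first exact: exprn_gt0 (half_gt0 R).
by split=> [s hs|s s' F F' hs hs' hd]; [exact: Q_mconv hs | exact: Q_holder hs hs' hd].
Qed.
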